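(* Consider the discrete setting described in the context, with a fixed constant $\rho_\infty^*>0$. For every initial datum $(f^0_{ij},g^0_{ij})_{i\in\mathcal I,j\in\mathcal J}$, the linearized scheme $$\frac{f^{n+1}_{ij}-f^n_{ij}}{\Delta t}+\frac{1}{\Delta x\,\Delta v}\big(\mathcal F^{n+1}_{i+\frac12,j}-\mathcal F^{n+1}_{i-\frac12,j}\big)=-\rho_\infty^*\chi_{1,j}\rho^{n+1}_{g,i}-(\rho_\infty^* )^{-1}f^{n+1}_{ij},$$ $$\frac{g^{n+1}_{ij}-g^n_{ij}}{\Delta t}+\frac{1}{\Delta x\,\Delta v}\big(\mathcal G^{n+1}_{i+\frac12,j}-\mathcal G^{n+1}_{i-\frac12,j}\big)=-(\rho_\infty^* )^{-1}\chi_{2,j}\rho^{n+1}_{f,i}-\rho_\infty^*\,g^{n+1}_{ij}$$ ($n\ge0$, $i\in\mathcal I$, $j\in\mathcal J$) admits a unique solution $(f^n_{ij},g^n_{ij})_{n\ge0,i\in\mathcal I,j\in\mathcal J}$.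
   Context: Space mesh: $N$ uniform cells of length $\Delta x$ of the torus, indexed by $i\in\mathcal I=\mathbb Z/N\mathbb Z$ (periodic). Velocity mesh: $\Delta v=v^*/L$, cells indexed by $j\in\mathcal J=\{-L+1,\dots,L\}$ with midpoints $v_j=(j-\tfrac12)\Delta v$. Time step $\Delta t>0$; $\lambda=\Delta x/(2\Delta t)>0$. For $k=1,2$, $\chi_{k,j}>0$, $\chi_{k,j}=\chi_{k,1-j}$, $\sum_j\Delta v\,\chi_{k,j}=1$. Densities $\rho_{f,i}=\sum_j\Delta v\,f_{ij}$, $\rho_{g,i}=\sum_j\Delta v\,g_{ij}$. Fluxes: $\mathcal F^{n+1}_{i+\frac12,j}=\Delta v\frac{v_j}{2}(f^{n+1}_{i+1,j}+f^{n+1}_{ij})-\Delta v\,\lambda(f^{n+1}_{i+1,j}-f^{n+1}_{ij})$, and $\mathcal G$ the same with $g$ in place of $f$. *)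

From mathcomp Require Import all_boot all_order all_algebra.
Set Implicit Arguments. Unset Strict Implicit. Unset Printing Implicit Defensive.
Import Order.TTheory GRing.Theory Num.Theory.
Local Open Scope ring_scope.

(* Space cells: i : 'I_N (periodic, via ordS / ord_pred).
   Velocity cells: k : 'I_(2*L) encodes the paper's index j = k - L + 1,
   so j ranges over {-L+1, ..., L}. *)

Section Scheme.
Variable R : realFieldType.

(* midpoint v_j = (j - 1/2) dv  with j = k - L + 1 *)
Definition vmid (L : nat) (dv : R) (k : 'I_(2 * L)) : R :=
  ((k : nat)%:R - L%:R + 2^-1) * dv.

Definition dens (N L : nat) (dv : R) (f : 'I_N -> 'I_(2 * L) -> R) (i : 'I_N) : R :=
  \sum_(k < 2 * L) dv * f i k.

Definition flux (N L : nat) (dv lam : R) (f : 'I_N -> 'I_(2 * L) -> R)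
    (i : 'I_N) (k : 'I_(2 * L)) : R :=
  dv * (vmid dv k / 2) * (f (ordS i) k + f i k) - dv * lam * (f (ordS i) k - f i k).

Definition lin_scheme (N L : nat) (dx dv dt rinf : R) (chi1 chi2 : 'I_(2 * L) -> R)
    (f g : nat -> 'I_N -> 'I_(2 * L) -> R) : Prop :=
  let lam := dx / (2 * dt) in
  forall (n : nat) (i : 'I_N) (k : 'I_(2 * L)),
    (f n.+1 i k - f n i k) / dt
      + (dx * dv)^-1 * (flux dv lam (f n.+1) i k - flux dv lam (f n.+1) (ord_pred i) k)
      = - rinf * chi1 k * dens dv (g n.+1) i - rinf^-1 * f n.+1 i k
    /\
    (g n.+1 i k - g n i k) / dt
      + (dx * dv)^-1 * (flux dv lam (g n.+1) i k - flux dv lam (g n.+1) (ord_pred i) k)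
      = - rinf^-1 * chi2 k * dens dv (f n.+1) i - rinf * g n.+1 i k.

End Scheme.

(* Each time step is a square linear system for (f^(n+1), g^(n+1)) with
   right-hand side (f^n, g^n) / dt, so it suffices that the implicit operator
   is injective.  This is an energy estimate: test the f-equation against
   f / (rinf chi1) and the g-equation against rinf g / chi2 and add.  The upwind
   transport term is nonnegative, and the couplings rho_f rho_g / dv are
   absorbed by the relaxation terms thanks to the Cauchy-Schwarz bound
   rho_f^2 <= dv sum_j f_j^2 / chi_j.  What is left is dt^-1 times weighted L^2
   norms of f and g, which therefore vanish. *)

From HB Require Import structures.
From mathcomp Require Import all_boot all_order all_algebra.
From mathcomp Require Import ring lra.
Import Order.TTheory GRing.Theory Num.Theory.
Local Open Scope ring_scope.

Set Implicit Arguments.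
Unset Strict Implicit.
Unset Printing Implicit Defensive.

Lemma upwind_transport_ge0 (R : realFieldType) (N : nat) (dv s lam : R) (F fl : 'I_N -> R) :
  0 <= dv -> 0 <= lam ->
  (forall i, fl i = dv * (s / 2) * (F (ordS i) + F i) - dv * lam * (F (ordS i) - F i)) ->
  0 <= \sum_i F i * (fl i - fl (ord_pred i)).
Proof.
move=> hdv hlam hfl.
have shift_fl : \sum_i F i * fl (ord_pred i) = \sum_i F (ordS i) * fl i.
  rewrite [LHS](reindex_inj (@ordS_inj N)) /=.
  by under eq_bigr do rewrite ordSK.
have shift_sq : \sum_i F (ordS i) ^+ 2 = \sum_i F i ^+ 2.
  by rewrite [RHS](reindex_inj (@ordS_inj N)).
have -> : \sum_i F i * (fl i - fl (ord_pred i)) =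
    \sum_i (F i * fl i - F (ordS i) * fl i).
  by rewrite sumrB -shift_fl -sumrB; apply: eq_bigr => i _; ring.
(* the centred part telescopes, the upwind part is a sum of squares *)
have -> : \sum_i (F i * fl i - F (ordS i) * fl i) =
    dv * (s / 2) * (\sum_i F i ^+ 2 - \sum_i F (ordS i) ^+ 2)
    + \sum_i dv * lam * (F (ordS i) - F i) ^+ 2.
  rewrite -sumrB mulr_sumr -big_split /=.
  by apply: eq_bigr => i _; rewrite hfl; ring.
rewrite shift_sq subrr mulr0 add0r.
by apply: sumr_ge0 => i _; apply: mulr_ge0; [exact: mulr_ge0 | exact: sqr_ge0].
Qed.

Lemma weighted_cauchy_schwarz (R : realFieldType) (M : nat) (dv : R) (chi F : 'I_M -> R) :
  0 < dv -> (forall k, 0 < chi k) -> \sum_k dv * chi k = 1 ->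
  (\sum_k dv * F k) ^+ 2 <= dv * \sum_k F k ^+ 2 / chi k.
Proof.
move=> hdv hchi hmass.
have var_ge0 (rho : R) :
    0 <= dv * \sum_k F k ^+ 2 / chi k - 2 * rho * \sum_k dv * F k
         + rho ^+ 2 * \sum_k dv * chi k.
  rewrite !mulr_sumr -sumrB -big_split /=.
  apply: sumr_ge0 => k _.
  have -> : dv * (F k ^+ 2 / chi k) - 2 * rho * (dv * F k) + rho ^+ 2 * (dv * chi k)
      = dv * chi k * (F k / chi k - rho) ^+ 2 by field; rewrite gt_eqF.
  by rewrite mulr_ge0 ?sqr_ge0 // mulr_ge0 // ltW.
by have := var_ge0 (\sum_k dv * F k); rewrite hmass; lra.
Qed.

Lemma cross_term_ge0 (R : realFieldType) (x y p q dv r : R) :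
  0 < dv -> 0 < r -> x ^+ 2 <= dv * p -> y ^+ 2 <= dv * q ->
  0 <= p / r ^+ 2 + r ^+ 2 * q + 2 * x * y / dv.
Proof.
move=> hdv hr hp hq; have hr2 : 0 < r ^+ 2 by exact: exprn_gt0.
rewrite -(pmulr_rge0 _ hdv).
have -> : dv * (p / r ^+ 2 + r ^+ 2 * q + 2 * x * y / dv) =
    (dv * p - x ^+ 2) / r ^+ 2 + r ^+ 2 * (dv * q - y ^+ 2) + (x / r + r * y) ^+ 2.
  by field; rewrite !gt_eqF.
have t1 : 0 <= (dv * p - x ^+ 2) / r ^+ 2 by rewrite divr_ge0 ?subr_ge0 // ltW.
have t2 : 0 <= r ^+ 2 * (dv * q - y ^+ 2) by rewrite mulr_ge0 ?subr_ge0 // ltW.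
by rewrite !addr_ge0 ?sqr_ge0.
Qed.

Lemma inj_linear_rinv (K : fieldType) (vT : vectType K) (f : {linear vT -> vT}) :
  injective f -> cancel ((linfun f)^-1)%VF f.
Proof.
move=> f_inj y; have ker0 : lker (linfun f) == 0%VS.
  by apply/lker0P => u v; rewrite !lfunE; exact: f_inj.
by rewrite -[f _]lfunE /= (lker0_lfunVK ker0).
Qed.

Section Scheme.

Variables (R : realFieldType) (N L : nat) (dx dv dt : R).
Hypotheses (hdx : 0 < dx) (hdv : 0 < dv) (hdt : 0 < dt).

Local Notation grid_fun := ('I_N -> 'I_(2 * L) -> R).

Definition scheme_op (chi : 'I_(2 * L) -> R) (s : R) (F G : grid_fun) i k : R :=
  F i k / dt
  + (dx * dv)^-1 * (flux dv (dx / (2 * dt)) F i k - flux dv (dx / (2 * dt)) F (ord_pred i) k)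
  + s * chi k * dens dv G i + s^-1 * F i k.

Lemma scheme_op_lin chi s a (F F' G G' H K : grid_fun) :
  (forall i k, H i k = a * F i k + F' i k) -> (forall i k, K i k = a * G i k + G' i k) ->
  forall i k, scheme_op chi s H K i k = a * scheme_op chi s F G i k + scheme_op chi s F' G' i k.
Proof.
move=> hH hK i k; rewrite /scheme_op.
have -> : dens dv K i = a * dens dv G i + dens dv G' i.
  by rewrite /dens mulr_sumr -big_split; apply: eq_bigr => k' _ /=; rewrite hK; ring.
by rewrite /flux !hH; ring.
Qed.

Definition wnorm (chi : 'I_(2 * L) -> R) (F : grid_fun) : R :=
  \sum_i \sum_k F i k ^+ 2 / chi k.

Lemma wnorm_ge0 chi F : (forall k, 0 < chi k) -> 0 <= wnorm chi F.
Proof.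
by move=> hchi; do 2!apply: sumr_ge0 => ? _; rewrite divr_ge0 ?sqr_ge0 ?ltW.
Qed.

Lemma wnorm_eq0 chi F : (forall k, 0 < chi k) -> wnorm chi F = 0 -> forall i k, F i k = 0.
Proof.
move=> hchi hF i k; have term_ge0 i' k' : 0 <= F i' k' ^+ 2 / chi k'.
  by rewrite divr_ge0 ?sqr_ge0 ?ltW.
have row_ge0 i' : 0 <= \sum_k F i' k ^+ 2 / chi k by apply: sumr_ge0 => k' _.
have row0 := psumr_eq0P (fun i' _ => row_ge0 i') hF (i := i) isT.
have := psumr_eq0P (fun k' _ => term_ge0 i k') row0 (i := k) isT.
by move/eqP; rewrite mulf_eq0 invr_eq0 (gt_eqF (hchi k)) orbF sqrf_eq0 => /eqP.
Qed.

Lemma scheme_op_energy chi s F G : (forall k, 0 < chi k) -> 0 < s ->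
  (dt^-1 + s^-1) / s * wnorm chi F + \sum_i dens dv F i * dens dv G i / dv
  <= \sum_i \sum_k F i k / (s * chi k) * scheme_op chi s F G i k.
Proof.
move=> hchi hs; set lam := dx / (2 * dt).
pose DF i k := flux dv lam F i k - flux dv lam F (ord_pred i) k.
have pointwise i k : F i k / (s * chi k) * scheme_op chi s F G i k =
    (dt^-1 + s^-1) / s * (F i k ^+ 2 / chi k) + F i k * dens dv G i
    + (dx * dv)^-1 / s / chi k * (F i k * DF i k).
  by rewrite /scheme_op /DF; field; rewrite !gt_eqF.
have coupling i : \sum_k F i k * dens dv G i = dens dv F i * dens dv G i / dv.
  by rewrite -mulr_suml [dens dv F i]/dens -mulr_sumr; field; rewrite gt_eqF.
have transport_ge0 : 0 <= \sum_i \sum_k (dx * dv)^-1 / s / chi k * (F i k * DF i k).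
  rewrite exchange_big /=; apply: sumr_ge0 => k _; rewrite -mulr_sumr.
  apply: mulr_ge0; first by rewrite !divr_ge0 ?invr_ge0 ?mulr_ge0 ?ltW.
  apply: (@upwind_transport_ge0 _ _ dv (vmid dv k) lam) => //; first exact: ltW.
  by rewrite divr_ge0 ?mulr_ge0 ?ltW.
have -> : \sum_i \sum_k F i k / (s * chi k) * scheme_op chi s F G i k =
    (dt^-1 + s^-1) / s * wnorm chi F + \sum_i dens dv F i * dens dv G i / dv
    + \sum_i \sum_k (dx * dv)^-1 / s / chi k * (F i k * DF i k).
  rewrite /wnorm mulr_sumr -!big_split; apply: eq_bigr => i _ /=.
  rewrite -coupling mulr_sumr -!big_split; apply: eq_bigr => k _ /=.
  exact: pointwise.
by rewrite lerDl.
Qed.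

Variables (rinf : R) (chi1 chi2 : 'I_(2 * L) -> R).
Hypotheses (hrinf : 0 < rinf) (hchi1 : forall k, 0 < chi1 k) (hchi2 : forall k, 0 < chi2 k).
Hypotheses (hmass1 : \sum_k dv * chi1 k = 1) (hmass2 : \sum_k dv * chi2 k = 1).

Lemma lin_schemeP f g :
  lin_scheme dx dv dt rinf chi1 chi2 f g <->
  forall n i k, scheme_op chi1 rinf (f n.+1) (g n.+1) i k = f n i k / dt
             /\ scheme_op chi2 rinf^-1 (g n.+1) (f n.+1) i k = g n i k / dt.
Proof.
rewrite /lin_scheme /scheme_op invrK.
by split=> h n i k; have [h1 h2] := h n i k; split; lra.
Qed.

Lemma wnorm_coupling_ge0 F G :
  0 <= wnorm chi1 F / rinf ^+ 2 + rinf ^+ 2 * wnorm chi2 G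
       + 2 * \sum_i dens dv F i * dens dv G i / dv.
Proof.
rewrite /wnorm !mulr_sumr mulr_suml -!big_split; apply: sumr_ge0 => i _ /=.
have := cross_term_ge0 hdv hrinf (weighted_cauchy_schwarz (F i) hdv hchi1 hmass1)
                                (weighted_cauchy_schwarz (G i) hdv hchi2 hmass2).
by rewrite !mulrA.
Qed.

Lemma scheme_op_kernel F G :
  (forall i k, scheme_op chi1 rinf F G i k = 0) ->
  (forall i k, scheme_op chi2 rinf^-1 G F i k = 0) ->
  forall i k, F i k = 0 /\ G i k = 0.
Proof.
move=> hF hG.
have hrinfV : 0 < rinf^-1 by rewrite invr_gt0.
have EF := scheme_op_energy F G hchi1 hrinf.
have EG := scheme_op_energy G F hchi2 hrinfV.
have tested0 chi s (A B : grid_fun) : (forall i k, scheme_op chi s A B i k = 0) ->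
    \sum_i \sum_k A i k / (s * chi k) * scheme_op chi s A B i k = 0.
  by move=> h; apply: big1 => i _; apply: big1 => k _; rewrite h mulr0.
rewrite (tested0 _ _ _ _ hF) in EF; rewrite (tested0 _ _ _ _ hG) in EG.
rewrite invrK (eq_bigr _ (fun i _ => congr1 (fun x => x / dv) (mulrC _ _))) in EG.
have cross := wnorm_coupling_ge0 F G.
have hc1 : 0 < dt^-1 / rinf by rewrite divr_gt0 ?invr_gt0.
have hc2 : 0 < dt^-1 * rinf by rewrite mulr_gt0 ?invr_gt0.
have W1 := wnorm_ge0 F hchi1; have W2 := wnorm_ge0 G hchi2.
have splitF : (dt^-1 + rinf^-1) / rinf * wnorm chi1 F =
    dt^-1 / rinf * wnorm chi1 F + wnorm chi1 F / rinf ^+ 2.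
  by field; rewrite !gt_eqF.
have splitG : (dt^-1 + rinf) * rinf * wnorm chi2 G =
    dt^-1 * rinf * wnorm chi2 G + rinf ^+ 2 * wnorm chi2 G by ring.
have P1 : 0 <= dt^-1 / rinf * wnorm chi1 F by rewrite mulr_ge0 // ltW.
have P2 : 0 <= dt^-1 * rinf * wnorm chi2 G by rewrite mulr_ge0 // ltW.
have F0 : wnorm chi1 F = 0.
  by apply/eqP; rewrite eq_le W1 andbT -(pmulr_rle0 _ hc1); lra.
have G0 : wnorm chi2 G = 0.
  by apply/eqP; rewrite eq_le W2 andbT -(pmulr_rle0 _ hc2); lra.
by move=> i k; rewrite (wnorm_eq0 hchi1 F0) (wnorm_eq0 hchi2 G0).
Qed.

Lemma scheme_op_inj F G F' G' :
  (forall i k, scheme_op chi1 rinf F G i k = scheme_op chi1 rinf F' G' i k) ->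
  (forall i k, scheme_op chi2 rinf^-1 G F i k = scheme_op chi2 rinf^-1 G' F' i k) ->
  forall i k, F i k = F' i k /\ G i k = G' i k.
Proof.
move=> hF hG.
pose dF i k := F i k - F' i k; pose dG i k := G i k - G' i k.
have dFE i k : dF i k = -1 * F' i k + F i k by rewrite /dF; ring.
have dGE i k : dG i k = -1 * G' i k + G i k by rewrite /dG; ring.
have hd : forall i k, dF i k = 0 /\ dG i k = 0.
  apply: scheme_op_kernel => i k.
  - by rewrite (scheme_op_lin _ _ dFE dGE) hF mulN1r addNr.
  - by rewrite (scheme_op_lin _ _ dGE dFE) hG mulN1r addNr.
by move=> i k; have [/subr0_eq -> /subr0_eq ->] := hd i k.
Qed.

Definition state := ('M[R]_(N, 2 * L) * 'M[R]_(N, 2 * L))%type.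

Definition scheme_map (u : state) : state :=
  (\matrix_(i, k) scheme_op chi1 rinf u.1 u.2 i k,
   \matrix_(i, k) scheme_op chi2 rinf^-1 u.2 u.1 i k).

Lemma scheme_map_is_linear : linear scheme_map.
Proof.
move=> a u v; congr pair; apply/matrixP => i k; rewrite !mxE;
  by apply: scheme_op_lin => i' k'; rewrite !mxE.
Qed.

HB.instance Definition _ :=
  GRing.isLinear.Build R state state *:%R scheme_map scheme_map_is_linear.

Lemma scheme_map_inj : injective scheme_map.
Proof.
move=> u v euv; have [/matrixP e1 /matrixP e2] := (congr1 fst euv, congr1 snd euv).
have e : forall i k, u.1 i k = v.1 i k /\ u.2 i k = v.2 i k.
  by apply: scheme_op_inj => i k; [move: (e1 i k) | move: (e2 i k)]; rewrite !mxE.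
rewrite [u]surjective_pairing [v]surjective_pairing.
by congr pair; apply/matrixP => i k; have [] := e i k.
Qed.

End Scheme.

Unset Implicit Arguments.
Set Strict Implicit.

Theorem corollary4p2 (R : realFieldType) (N L : nat) (dx vstar dt rinf : R)
    (chi1 chi2 : 'I_(2 * L) -> R)
    (hN : (0 < N)%N) (hL : (0 < L)%N)
    (hdx : 0 < dx) (hvstar : 0 < vstar) (hdt : 0 < dt) (hrinf : 0 < rinf)
    (hchi1pos : forall k, 0 < chi1 k) (hchi2pos : forall k, 0 < chi2 k)
    (hchi1sym : forall k, chi1 k = chi1 (rev_ord k))
    (hchi2sym : forall k, chi2 k = chi2 (rev_ord k))
    (hchi1mass : \sum_(k < 2 * L) (vstar / L%:R) * chi1 k = 1)
    (hchi2mass : \sum_(k < 2 * L) (vstar / L%:R) * chi2 k = 1)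
    (f0 g0 : 'I_N -> 'I_(2 * L) -> R) :
  exists f g : nat -> 'I_N -> 'I_(2 * L) -> R,
    [/\ f 0%N = f0, g 0%N = g0,
        lin_scheme dx (vstar / L%:R) dt rinf chi1 chi2 f g &
        forall f' g' : nat -> 'I_N -> 'I_(2 * L) -> R,
          f' 0%N = f0 -> g' 0%N = g0 ->
          lin_scheme dx (vstar / L%:R) dt rinf chi1 chi2 f' g' ->
          forall n i k, f' n i k = f n i k /\ g' n i k = g n i k].
Proof.
set dv := vstar / L%:R.
have hdv : 0 < dv by rewrite divr_gt0 // ltr0n.
pose Phi : state R N L -> state R N L := scheme_map dx dv dt rinf chi1 chi2.
have Phi_inj : injective Phi :=
  scheme_map_inj hdx hdv hdt hrinf hchi1pos hchi2pos hchi1mass hchi2mass.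
pose u := fix u n : state R N L :=
  if n is n'.+1 then ((linfun Phi)^-1)%VF (dt^-1 *: u n')
  else (\matrix_(i, k) f0 i k, \matrix_(i, k) g0 i k).
pose f n := if n is 0%N then f0 else fun i k => (u n).1 i k.
pose g n := if n is 0%N then g0 else fun i k => (u n).2 i k.
have fE n i k : f n i k = (u n).1 i k by case: n => [|n] //=; rewrite mxE.
have gE n i k : g n i k = (u n).2 i k by case: n => [|n] //=; rewrite mxE.
have step n i k : scheme_op dx dv dt chi1 rinf (f n.+1) (g n.+1) i k = f n i k / dt
               /\ scheme_op dx dv dt chi2 rinf^-1 (g n.+1) (f n.+1) i k = g n i k / dt.
  have e := inj_linear_rinv Phi_inj (dt^-1 *: u n).
  have [] := (congr1 (fun w : state R N L => w.1 i k) e,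
              congr1 (fun w : state R N L => w.2 i k) e).
  rewrite /Phi /= !mxE fE gE => e1 e2.
  by split; rewrite mulrC; [exact: e1 | exact: e2].
exists f, g; split => //; first exact/lin_schemeP.
move=> f' g' hf' hg' /lin_schemeP hs; elim=> [|n IH] i k; first by rewrite hf' hg'.
apply: (scheme_op_inj hdx hdv hdt hrinf hchi1pos hchi2pos hchi1mass hchi2mass) => {i k} i k.
- by have [-> _] := hs n i k; have [-> _] := step n i k; have [-> _] := IH i k.
- by have [_ ->] := hs n i k; have [_ ->] := step n i k; have [_ ->] := IH i k.
Qed.
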